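(* Let $\Omega\subset\mathbb{R}^2$ be open, $h>0$, $s\in\{1,2\}$, $u\in W^{1,2}(\Omega,\mathbb{R}^2)$, $\rho$ as in the context, and write $d(x)=\det\nabla u(x)$. Then for a.e. $x\in\Omega_h$: (i) $\Delta^{h,s}(\rho'(d)\operatorname{cof}\nabla u)(x)\cdot\Delta^{h,s}\nabla u(x)\ge-\gamma|\Delta^{h,s}\nabla u(x)|^2$; (ii) $|\Delta^{h,s}(\rho'(d)\operatorname{cof}\nabla u)(x)|\le\gamma|\Delta^{h,s}\nabla u(x)|+\frac{2\gamma}{h}|\nabla u(x)|$.
   Context: Fix $\gamma>0$, $s_0\ge0$, $\kappa\ge-\gamma s_0$; $\rho\in C^\infty(\mathbb{R})$ is convex with $\rho(s)=0$ for $s\le0$, $\rho(s)=\gamma s+\kappa$ for $s\ge s_0$ (smooth convex in between), so $0\le\rho'\le\gamma$ and $\rho'$ is nondecreasing. For $A\in\mathbb{R}^{2\times2}$, $\operatorname{cof}A=\begin{pmatrix}a_{22}&-a_{21}\\-a_{12}&a_{11}\end{pmatrix}$; $|\cdot|$, $\cdot$ are Frobenius norm and inner product. $\Omega_h=\{x\in\Omega:\operatorname{dist}(x,\partial\Omega)>h\}$, $e_1,e_2$ the standard basis, and the difference quotient is $\Delta^{h,s}f(x)=h^{-1}(f(x+he_s)-f(x))$. *)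

From HB Require Import structures.
From mathcomp Require Import all_boot all_order all_algebra.
From mathcomp Require Import all_classical all_reals all_analysis.
Set Implicit Arguments. Unset Strict Implicit. Unset Printing Implicit Defensive.
Import Order.TTheory GRing.Theory Num.Theory.
Import numFieldNormedType.Exports.
Local Open Scope classical_set_scope.
Local Open Scope ring_scope.

Section Defs.
Context {R : realType}.

(* cof A = [[a22, -a21], [-a12, a11]] : entry (i,j) = (-1)^(i+j) A (1-i) (1-j) *)
Definition cofm (A : 'M[R]_2) : 'M[R]_2 :=
  \matrix_(i < 2, j < 2) ((-1) ^+ (i + j) * A (rev_ord i) (rev_ord j)).

Definition frob_dot (A B : 'M[R]_2) : R := \sum_(i < 2) \sum_(j < 2) A i j * B i j.
Definition frob_norm (A : 'M[R]_2) : R := Num.sqrt (frob_dot A A).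

(* standard basis e_1 = (1,0), e_2 = (0,1) (index s : 'I_2, 0-based) *)
Definition ebasis (s : 'I_2) : R * R := if s == ord0 then (1, 0) else (0, 1).

Definition shift (x : R * R) (t : R) (s : 'I_2) : R * R :=
  (x.1 + t * (ebasis s).1, x.2 + t * (ebasis s).2).

Definition dq (h : R) (s : 'I_2) (F : R * R -> 'M[R]_2) (x : R * R) : 'M[R]_2 :=
  h^-1 *: (F (shift x h s) - F x).

Definition edist (x y : R * R) : R := Num.sqrt ((x.1 - y.1) ^+ 2 + (x.2 - y.2) ^+ 2).

(* Omega_h = { x in Omega : dist(x, boundary Omega) > h }; for x in the open set
   Omega, dist(x, boundary) = sup { r : B(x,r) subset Omega } (= +oo if the
   boundary is empty), so dist > h iff some ball of radius r > h is in Omega. *)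
Definition inner_set (Om : set (R * R)) (h : R) : set (R * R) :=
  [set x | Om x /\ exists2 r, h < r & forall y, edist x y < r -> Om y].

Definition leb2 := (@lebesgue_measure R \x @lebesgue_measure R)%E.

Definition iterD (vs : seq (R * R)) (phi : R * R -> R) : R * R -> R :=
  foldr (fun v g => 'D_v g) phi vs.

Definition smooth2 (phi : R * R -> R) : Prop :=
  forall (vs : seq (R * R)) (x : R * R), differentiable (iterD vs phi) x.

Definition test_fun (Om : set (R * R)) (phi : R * R -> R) : Prop :=
  smooth2 phi /\
  exists K : set (R * R), [/\ compact K, K `<=` Om & forall x, ~ K x -> phi x = 0].

Definition L2on (Om : set (R * R)) (f : R * R -> R) : Prop :=
  measurable_fun Om f /\ (\int[leb2]_(x in Om) ((f x) ^+ 2)%:E < +oo)%E.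

(* u = (u 0, u 1) in W^{1,2}(Omega, R^2) with weak gradient G
   (G x i j = d_j u_i (x)); G is any representative of nabla u. *)
Definition W12_grad (Om : set (R * R)) (u : 'I_2 -> R * R -> R)
    (G : R * R -> 'M[R]_2) : Prop :=
  [/\ forall i, L2on Om (u i),
      forall i j, L2on Om (fun x => G x i j) &
      forall (i j : 'I_2) (phi : R * R -> R), test_fun Om phi ->
        (\int[leb2]_(x in Om) (u i x * 'D_(ebasis j) phi x)%:E
         = - \int[leb2]_(x in Om) (G x i j * phi x)%:E)%E].

Definition rho_adm (gam s0 kap : R) (rho : R -> R) : Prop :=
  [/\ forall (n : nat) (t : R), derivable (derive1n n rho) t 1,
      forall x y t : R, 0 <= t <= 1 ->
        rho ((1 - t) * x + t * y) <= (1 - t) * rho x + t * rho y,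
      forall t : R, t <= 0 -> rho t = 0 &
      forall t : R, s0 <= t -> rho t = gam * t + kap].

End Defs.

(* The estimates hold at every point, for any matrix field and any nondecreasing
   coefficient c with values in [0, gam]; no regularity of u is used.  For
   c = rho' these bounds are convexity of rho together with its slopes 0 and gam
   on the two flat parts.  With P = G (x + h e_s), Q = G x, a = c (det Q) and
   b = c (det P), linearity of cof gives
     (b cof P - a cof Q) . (P - Q) = (a + b) det (P - Q) + (b - a) (det P - det Q),
   where the first term is >= -(a + b)/2 |P - Q|^2 because 2 |det X| <= |X|^2 and
   the second is >= 0 by monotonicity of c.  For the norm,
   b cof P - a cof Q = b cof (P - Q) + (b - a) cof Q and |cof X| = |X|. *)

From HB Require Import structures.
From mathcomp Require Import all_boot all_order all_algebra.
From mathcomp Require Import all_classical all_reals all_analysis.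
From mathcomp Require Import ring lra.
Set Implicit Arguments.
Unset Strict Implicit.
Unset Printing Implicit Defensive.

Import Order.TTheory GRing.Theory Num.Theory.
Import numFieldNormedType.Exports.
Local Open Scope classical_set_scope.
Local Open Scope ring_scope.

Local Notation i0 := (ord0 : 'I_2).
Local Notation i1 := (lift ord0 ord0 : 'I_2).

Section Frobenius.
Variable R : realType.
Implicit Types (X Y P Q : 'M[R]_2) (a b g : R).

Lemma frob_dotE X Y : frob_dot X Y =
  X i0 i0 * Y i0 i0 + X i0 i1 * Y i0 i1 + X i1 i0 * Y i1 i0 + X i1 i1 * Y i1 i1.
Proof. by rewrite /frob_dot !big_ord_recl !big_ord0 /= !addr0 !addrA. Qed.

Lemma cofmE X : [/\ cofm X i0 i0 = X i1 i1, cofm X i0 i1 = - X i1 i0,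
  cofm X i1 i0 = - X i0 i1 & cofm X i1 i1 = X i0 i0].
Proof.
have rev0 : rev_ord i0 = i1 by apply: val_inj.
have rev1 : rev_ord i1 = i0 by apply: val_inj.
by rewrite /cofm !mxE rev0 rev1 /= expr0 expr1 expr2 mulN1r mul1r mulrN1 opprK !mulN1r mul1r.
Qed.

Lemma det2E X : \det X = X i0 i0 * X i1 i1 - X i0 i1 * X i1 i0.
Proof.
rewrite (expand_det_row _ ord0) !big_ord_recl big_ord0 /cofactor !det_mx11 !mxE /=.
have -> : lift ord0 (0 : 'I_1) = i1 by apply: val_inj.
have -> : lift i1 (0 : 'I_1) = i0 by apply: val_inj.
by rewrite /bump /= expr0 expr1 mul1r addr0 mulN1r mulrN.
Qed.

Lemma cofmB X Y : cofm (X - Y) = cofm X - cofm Y.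
Proof. by apply/matrixP => i j; rewrite !mxE mulrBr. Qed.

Lemma frob_dotZ a b X Y : frob_dot (a *: X) (b *: Y) = a * b * frob_dot X Y.
Proof. rewrite !frob_dotE !mxE; ring. Qed.

Lemma frob_dot_ge0 X : 0 <= frob_dot X X.
Proof. rewrite frob_dotE; nra. Qed.

Lemma frob_norm_ge0 X : 0 <= frob_norm X.
Proof. exact: sqrtr_ge0. Qed.

Lemma frob_norm_sqr X : frob_norm X ^+ 2 = frob_dot X X.
Proof. by rewrite sqr_sqrtr ?frob_dot_ge0. Qed.

Lemma frob_normZ a X : frob_norm (a *: X) = `|a| * frob_norm X.
Proof. by rewrite /frob_norm frob_dotZ -expr2 sqrtrM ?sqr_ge0 // sqrtr_sqr. Qed.

Lemma frob_norm_cofm X : frob_norm (cofm X) = frob_norm X.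
Proof.
by rewrite /frob_norm !frob_dotE; case: (cofmE X) => -> -> -> ->; congr Num.sqrt; ring.
Qed.

Lemma frob_dot_sqr_le X Y : frob_dot X Y ^+ 2 <= frob_dot X X * frob_dot Y Y.
Proof.
rewrite !frob_dotE.
set x1 := X i0 i0; set x2 := X i0 i1; set x3 := X i1 i0; set x4 := X i1 i1.
set y1 := Y i0 i0; set y2 := Y i0 i1; set y3 := Y i1 i0; set y4 := Y i1 i1.
(* Lagrange's identity *)
have -> : (x1 * x1 + x2 * x2 + x3 * x3 + x4 * x4) * (y1 * y1 + y2 * y2 + y3 * y3 + y4 * y4)
  = (x1 * y1 + x2 * y2 + x3 * y3 + x4 * y4) ^+ 2
    + ((x1 * y2 - x2 * y1) ^+ 2 + (x1 * y3 - x3 * y1) ^+ 2 + (x1 * y4 - x4 * y1) ^+ 2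
    + (x2 * y3 - x3 * y2) ^+ 2 + (x2 * y4 - x4 * y2) ^+ 2 + (x3 * y4 - x4 * y3) ^+ 2).
  by ring.
by rewrite lerDl !addr_ge0 ?sqr_ge0.
Qed.

Lemma frob_dot_le X Y : frob_dot X Y <= frob_norm X * frob_norm Y.
Proof.
rewrite -sqrtrM ?frob_dot_ge0 // (le_trans (ler_norm _)) //.
by rewrite -sqrtr_sqr ler_sqrt ?frob_dot_sqr_le // mulr_ge0 ?frob_dot_ge0.
Qed.

Lemma frob_normD X Y : frob_norm (X + Y) <= frob_norm X + frob_norm Y.
Proof.
rewrite -(ler_pXn2r (n := 2)) ?nnegrE ?addr_ge0 ?frob_norm_ge0 //.
have -> : frob_norm (X + Y) ^+ 2 = frob_norm X ^+ 2 + frob_norm Y ^+ 2 + 2 * frob_dot X Y.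
  by rewrite !frob_norm_sqr !frob_dotE !mxE; ring.
by have := frob_dot_le X Y; nra.
Qed.

Lemma frob_dot_ge_det X : - frob_dot X X <= 2 * \det X.
Proof.
rewrite frob_dotE det2E.
have := sqr_ge0 (X i0 i0 + X i1 i1); have := sqr_ge0 (X i0 i1 - X i1 i0); nra.
Qed.

Lemma frob_dot_scale_cofmB a b P Q :
  frob_dot (b *: cofm P - a *: cofm Q) (P - Q)
  = (a + b) * \det (P - Q) + (b - a) * (\det P - \det Q).
Proof.
have entry i j : (b *: cofm P - a *: cofm Q) i j = b * cofm P i j - a * cofm Q i j.
  by rewrite !mxE.
rewrite !frob_dotE !det2E !entry; case: (cofmE P) => -> -> -> ->.
by case: (cofmE Q) => -> -> -> ->; rewrite !mxE; ring.
Qed.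

Lemma scale_cofmB_dot_ge a b g P Q : 0 <= a <= g -> 0 <= b <= g ->
  0 <= (b - a) * (\det P - \det Q) ->
  - g * frob_dot (P - Q) (P - Q) <= frob_dot (b *: cofm P - a *: cofm Q) (P - Q).
Proof.
move=> /andP[a0 ag] /andP[b0 bg] mono; rewrite frob_dot_scale_cofmB.
have := frob_dot_ge_det (P - Q); have := frob_dot_ge0 (P - Q); nra.
Qed.

Lemma scale_cofmB_norm_le a b g P Q : 0 <= a <= g -> 0 <= b <= g ->
  frob_norm (b *: cofm P - a *: cofm Q) <= g * frob_norm (P - Q) + g * frob_norm Q.
Proof.
move=> /andP[a0 ag] /andP[b0 bg].
have -> : b *: cofm P - a *: cofm Q = b *: cofm (P - Q) + (b - a) *: cofm Q.
  by rewrite cofmB scalerBr scalerBl addrA subrK.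
apply: le_trans (frob_normD _ _) _; rewrite !frob_normZ !frob_norm_cofm.
rewrite (ger0_norm b0) lerD ?ler_wpM2r ?frob_norm_ge0 //.
by rewrite ler_norml; lra.
Qed.

End Frobenius.

Definition slope {R : realType} (f : R -> R) (x y : R) : R := (f y - f x) / (y - x).

Lemma derive1_right_cvg (R : realType) (f : R -> R) (x : R) :
  derivable f x 1 -> slope f x (h + x) @[h --> 0^'+] --> derive1 f x.
Proof.
move=> df; rewrite derive1E.
have c : (fun h => h^-1 *: ((f \o shift x) (h *: 1) - f x)) @ 0^' --> 'D_1 f x := df.
apply: cvg_trans c => P /=; rewrite !near_simpl /= !near_withinE.
apply: filterS => h Ph h0; have {}Ph := Ph (lt0r_neq0 h0).
by rewrite /slope addrK mulrC; move: Ph; rewrite /GRing.scale /= mulr1.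
Qed.

Section ConvexFunction.
Variables (R : realType) (f : R -> R).
Hypothesis f_convex : forall x y t : R, 0 <= t <= 1 ->
  f ((1 - t) * x + t * y) <= (1 - t) * f x + t * f y.

Lemma convex_three_point x m y : x < m -> m < y ->
  f m * (y - x) <= (y - m) * f x + (m - x) * f y.
Proof.
move=> xm my; have yx : 0 < y - x by lra.
set t := (m - x) / (y - x).
have t01 : 0 <= t <= 1 by rewrite divr_ge0 ?ler_pdivrMr /=; lra.
have := f_convex x y t01.
have -> : (1 - t) * x + t * y = m by rewrite /t; field; lra.
rewrite -(ler_pM2r yx); congr (_ <= _); rewrite /t; field; lra.
Qed.

Lemma convex_slope_le_right x m y : x < m -> m < y -> slope f x m <= slope f x y.
Proof.
move=> xm my; have := convex_three_point xm my; have xy := lt_trans xm my.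
by rewrite /slope ler_pdivrMr ?subr_gt0 // mulrAC ler_pdivlMr ?subr_gt0 //; lra.
Qed.

Lemma convex_slope_le_next x m y : x < m -> m < y -> slope f x m <= slope f m y.
Proof.
move=> xm my; have := convex_three_point xm my.
by rewrite /slope ler_pdivrMr ?subr_gt0 // mulrAC ler_pdivlMr ?subr_gt0 //; lra.
Qed.

Hypothesis f_derivable : forall x, derivable f x 1.
Arguments f_derivable : clear implicits.

Lemma derive1_le_slope x y : x < y -> derive1 f x <= slope f x y.
Proof.
move=> xy; apply: (cvgr_to_le (derive1_right_cvg (f_derivable x))).
near=> h; apply: convex_slope_le_right.
- by rewrite ltrDr; near: h; exact: nbhs_right_gt.
- by rewrite -ltrBrDr; near: h; apply: nbhs_right_lt; rewrite subr_gt0.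
Unshelve. all: by end_near.
Qed.

Lemma slope_le_derive1 x y : x < y -> slope f x y <= derive1 f y.
Proof.
move=> xy; apply: (cvgr_to_ge (derive1_right_cvg (f_derivable y))).
near=> h; apply: convex_slope_le_next => //.
by rewrite ltrDr; near: h; exact: nbhs_right_gt.
Unshelve. all: by end_near.
Qed.

Lemma convex_derive1_homo : {homo derive1 f : x y / x <= y}.
Proof.
move=> x y; rewrite le_eqVlt => /predU1P[-> //|xy].
exact: le_trans (derive1_le_slope xy) (slope_le_derive1 xy).
Qed.

End ConvexFunction.

Section AdmissibleRho.
Variables (R : realType) (gam s0 kap : R) (rho : R -> R).
Hypothesis rho_ok : rho_adm gam s0 kap rho.

Lemma rho_derive1_homo : {homo derive1 rho : x y / x <= y}.
Proof.
case: rho_ok => rho_der rho_conv _ _.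
exact: convex_derive1_homo rho_conv (fun t => rho_der 0%N t).
Qed.

Lemma rho_derive1_bounds t : 0 <= derive1 rho t <= gam.
Proof.
case: (rho_ok) => rho_der rho_conv rho_neg rho_lin.
have rho_der1 x : derivable rho x 1 := rho_der 0%N x.
apply/andP; split.
- set m := Num.min t 0.
  have m0 : m <= 0 by rewrite ge_min lexx orbT.
  have flat : slope rho (m - 1) m = 0.
    by rewrite /slope !rho_neg ?subrr ?mul0r //; lra.
  rewrite -flat (le_trans (slope_le_derive1 rho_conv rho_der1 _)) ?gtrBl ?ltr01 //.
  by rewrite rho_derive1_homo // ge_min lexx.
- set M := Num.max t s0.
  have M0 : s0 <= M by rewrite le_max lexx orbT.
  have affine : slope rho M (M + 1) = gam.
    by rewrite /slope !rho_lin ?(le_trans M0) ?lerDl //; field; lra.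
  rewrite -affine (le_trans _ (derive1_le_slope rho_conv rho_der1 _)) ?ltrDl ?ltr01 //.
  by rewrite rho_derive1_homo // le_max lexx.
Qed.

End AdmissibleRho.

Lemma dq_scale_cofm_bounds (R : realType) (c : R -> R) (g h : R) (s : 'I_2)
    (F : R * R -> 'M[R]_2) (x : R * R) :
  0 < h -> (forall t, 0 <= c t <= g) -> {homo c : t u / t <= u} ->
  let D := dq h s F x in
  let A := dq h s (fun y => c (\det (F y)) *: cofm (F y)) x in
  - g * frob_norm D ^+ 2 <= frob_dot A D /\
  frob_norm A <= g * frob_norm D + 2 * g / h * frob_norm (F x).
Proof.
move=> h_gt0 c_bounds c_homo /=; rewrite /dq.
set P := F _; set Q := F x.
have cQ := c_bounds (\det Q); have cP := c_bounds (\det P).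
have k_gt0 : 0 < h^-1 by rewrite invr_gt0.
split.
- have c_mono : 0 <= (c (\det P) - c (\det Q)) * (\det P - \det Q).
    case: (leP (\det Q) (\det P)) => [QP | /ltW PQ].
      by rewrite mulr_ge0 ?subr_ge0 ?c_homo.
    by rewrite mulr_le0 ?subr_le0 ?c_homo.
  rewrite frob_norm_sqr !frob_dotZ mulrCA ler_pM2l ?mulr_gt0 //.
  exact: scale_cofmB_dot_ge.
- rewrite !frob_normZ !(gtr0_norm k_gt0).
  have g_ge0 : 0 <= g by case/andP: cQ; exact: le_trans.
  apply: le_trans (ler_wpM2l (ltW k_gt0) (scale_cofmB_norm_le P Q cQ cP)) _.
  rewrite mulrDr mulrCA lerD2l.
  have : 0 <= h^-1 * (g * frob_norm Q) by rewrite !mulr_ge0 ?frob_norm_ge0 // ltW.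
  have -> : 2 * g / h * frob_norm Q = 2 * (h^-1 * (g * frob_norm Q)) by ring.
  lra.
Qed.

Theorem lemma4p1 (R : realType) (Om : set (R * R)) (h : R) (s : 'I_2)
    (u : 'I_2 -> R * R -> R) (G : R * R -> 'M[R]_2)
    (gam s0 kap : R) (rho : R -> R) :
  open Om -> 0 < h -> W12_grad Om u G ->
  0 < gam -> 0 <= s0 -> - (gam * s0) <= kap -> rho_adm gam s0 kap rho ->
  {ae leb2, forall x, inner_set Om h x ->
    let D := dq h s G x in
    let A := dq h s (fun y => derive1 rho (\det (G y)) *: cofm (G y)) x in
    - gam * frob_norm D ^+ 2 <= frob_dot A D /\
    frob_norm A <= gam * frob_norm D + 2 * gam / h * frob_norm (G x)}.
Proof.
move=> _ h_gt0 _ _ _ _ rho_ok; apply: aeW => x _.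
exact: dq_scale_cofm_bounds h_gt0 (rho_derive1_bounds rho_ok) (rho_derive1_homo rho_ok).
Qed.
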